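(* Let $O$ be a finite order with $n$ elements having a questionable representation of finite width $k\ge2$ and finite length $l$. Then the comparability digraph of $O$ (arc $x\to y$ iff $x<y$) has a clique-width expression using at most $k$ labels, whose syntax tree has depth at most $l\,(k(k-1)+\lceil\log_2(k-1)\rceil)+\lceil\log_2 n\rceil+(l-1)(k-1)$.
   Context: For an ordinal $j$, $\mathcal O_j=(O_k)_{k<j}$ is a sequence of orders; a word of length $\ell\le j$ is $(x_k)_{k<\ell}$ with $x_k\in\mathrm{Dom}(O_k)$. The question of words $X,Y$ is $(k,x_k,y_k)$ for the least $k<\min(\mathrm{len}X,\mathrm{len}Y)$ with $x_k\ne y_k$, if it exists. For $i<j$, $\mathrm{Next}(i,j,\mathcal O_j)$ is the partial order on words of length $\ell$, $i\le\ell<j$, with $X<Y$ iff their question exists and $x_k<y_k$ in $O_k$; otherwise incomparable. A questionable representation of an order $O$ is an injective $f$ into some $\mathrm{Next}(i,j,\mathcal O_j)$ with $f(x)<f(y)\iff x<y$ for all $x,y$; its length is $j$ and its width is the supremum of the cardinalities of the $\mathrm{Dom}(O_k)$. Clique-width expressions (vertex creation with a label, disjoint union, relabelling, and adding all arcs from one label class to another) are the standard notion for directed graphs. *)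

From mathcomp Require Import all_boot.
Set Implicit Arguments. Unset Strict Implicit. Unset Printing Implicit Defensive.

(* A sequence of orders O_0,...,O_{l-1}: order O_m has domain {0,...,dom m - 1}
   (domains up to renaming) and strict order relation r m. *)
Definition strict_order_on (D : pred nat) (r : rel nat) : Prop :=
  (forall a, D a -> ~~ r a a) /\
  (forall a b c, D a -> D b -> D c -> r a b -> r b c -> r a c).

Definition orders_seq (l : nat) (dom : nat -> nat) (r : nat -> rel nat) : Prop :=
  forall m, m < l -> strict_order_on (fun a => a < dom m) (r m).

Definition next_word (i j : nat) (dom : nat -> nat) (w : seq nat) : Prop :=
  i <= size w < j /\ forall m, m < size w -> nth 0 w m < dom m.

Definition next_lt (r : nat -> rel nat) (X Y : seq nat) : Prop :=
  exists m, [/\ m < minn (size X) (size Y),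
               (forall p, p < m -> nth 0 X p = nth 0 Y p),
               nth 0 X m != nth 0 Y m &
               r m (nth 0 X m) (nth 0 Y m)].

Definition questionable_rep (T : finType) (lt : rel T) (i l : nat)
  (dom : nat -> nat) (r : nat -> rel nat) (f : T -> seq nat) : Prop :=
  [/\ i < l, orders_seq l dom r,
      forall x, next_word i l dom (f x),
      injective f &
      forall x y, next_lt r (f x) (f y) <-> lt x y].

Definition rep_width (l : nat) (dom : nat -> nat) (k : nat) : Prop :=
  (forall m, m < l -> dom m <= k) /\ (exists2 m, m < l & dom m = k).

(* Vertex creation carries the name of the created vertex (an element of T). *)
Inductive cwexp (T : Type) : Type :=
| CVert : T -> nat -> cwexp T
| CUnion : cwexp T -> cwexp T -> cwexp T
| CRelab : nat -> nat -> cwexp T -> cwexp T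
| CArcs : nat -> nat -> cwexp T -> cwexp T.

Section CW.
Variable T : eqType.

Fixpoint cw_verts (e : cwexp T) : seq T :=
  match e with
  | CVert v _ => [:: v]
  | CUnion e1 e2 => cw_verts e1 ++ cw_verts e2
  | CRelab _ _ e' => cw_verts e'
  | CArcs _ _ e' => cw_verts e'
  end.

Fixpoint cw_lab (e : cwexp T) : T -> nat :=
  match e with
  | CVert _ a => fun _ => a
  | CUnion e1 e2 => fun x => if x \in cw_verts e1 then cw_lab e1 x else cw_lab e2 x
  | CRelab a b e' => fun x => if cw_lab e' x == a then b else cw_lab e' x
  | CArcs _ _ e' => cw_lab e'
  end.

Fixpoint cw_arc (e : cwexp T) : rel T :=
  match e with
  | CVert _ _ => fun _ _ => false
  | CUnion e1 e2 => fun x y => cw_arc e1 x y || cw_arc e2 x y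
  | CRelab _ _ e' => cw_arc e'
  | CArcs a b e' => fun x y => cw_arc e' x y ||
      [&& x \in cw_verts e', y \in cw_verts e', cw_lab e' x == a & cw_lab e' y == b]
  end.

Fixpoint cw_wf (e : cwexp T) : bool :=
  match e with
  | CVert _ _ => true
  | CUnion e1 e2 => [&& cw_wf e1, cw_wf e2 & uniq (cw_verts e1 ++ cw_verts e2)]
  | CRelab _ _ e' => cw_wf e'
  | CArcs a b e' => (a != b) && cw_wf e'
  end.

Fixpoint cw_labels_below (k : nat) (e : cwexp T) : bool :=
  match e with
  | CVert _ a => a < k
  | CUnion e1 e2 => cw_labels_below k e1 && cw_labels_below k e2
  | CRelab a b e' => [&& a < k, b < k & cw_labels_below k e']
  | CArcs a b e' => [&& a < k, b < k & cw_labels_below k e']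
  end.

Fixpoint cw_depth (e : cwexp T) : nat :=
  match e with
  | CVert _ _ => 0
  | CUnion e1 e2 => (maxn (cw_depth e1) (cw_depth e2)).+1
  | CRelab _ _ e' => (cw_depth e').+1
  | CArcs _ _ e' => (cw_depth e').+1
  end.
End CW.

Definition cw_expr_of (T : finType) (lt : rel T) (k : nat) (e : cwexp T) : Prop :=
  [/\ cw_wf e, cw_labels_below k e, uniq (cw_verts e),
      (forall x : T, x \in cw_verts e) &
      (forall x y, cw_arc e x y = lt x y)].

From HB Require Import structures.
From mathcomp Require Import all_boot zify.
Set Implicit Arguments. Unset Strict Implicit. Unset Printing Implicit Defensive.

(* The expression is built along the trie of the words of the representation.
   For a prefix [p], the elements whose word extends [p] by the letter [c] are
   first assembled, all carrying label [c]. Two words that first differ right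
   after [p] compare as their letters there compare in the order [O_(size p)],
   so the union of these pieces only needs, for each pair of distinct letters,
   one arc operation oriented by that order; relabelling every letter to the
   letter of [p] one level up then closes the level. A level thus costs at most
   [k(k-1)/2] arc operations, [k-1] relabellings and one union level. The
   unions are arranged by Kraft's inequality, weighting a tree of depth [d] by
   [2 ^ d]: as each tree's weight stays proportional to its number of
   vertices, all levels together add only [log2 n] to the depth. *)

Section CwexpEqType.
Variable T : eqType.

Fixpoint cwexp_eqb (e1 e2 : cwexp T) : bool :=
  match e1, e2 with
  | CVert v a, CVert w b => (v == w) && (a == b)
  | CUnion a1 a2, CUnion b1 b2 => cwexp_eqb a1 b1 && cwexp_eqb a2 b2
  | CRelab a b e, CRelab a' b' e' => [&& a == a', b == b' & cwexp_eqb e e']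
  | CArcs a b e, CArcs a' b' e' => [&& a == a', b == b' & cwexp_eqb e e']
  | _, _ => false
  end.

Lemma cwexp_eqbP : Equality.axiom cwexp_eqb.
Proof.
elim=> [v a|a1 IH1 a2 IH2|a b e IH|a b e IH] [w b'|b1 b2|a' b'' e'|a' b'' e'] /=;
  try by constructor.
- by apply: (iffP andP) => [[/eqP-> /eqP->]|[-> ->]].
- by apply: (iffP andP) => [[/IH1-> /IH2->]|[<- <-]]; split; [apply/IH1|apply/IH2].
- by apply: (iffP and3P) => [[/eqP-> /eqP-> /IH->]|[-> -> <-]]; split=> //; apply/IH.
- by apply: (iffP and3P) => [[/eqP-> /eqP-> /IH->]|[-> -> <-]]; split=> //; apply/IH.
Qed.

HB.instance Definition _ := hasDecEq.Build (cwexp T) cwexp_eqbP.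
End CwexpEqType.

Section UnionTrees.
Variable T : eqType.
Implicit Types (e U : cwexp T) (es : seq (cwexp T)).

Definition forest_verts es := flatten [seq cw_verts e | e <- es].

Lemma forest_verts_cat es1 es2 :
  forest_verts (es1 ++ es2) = forest_verts es1 ++ forest_verts es2.
Proof. by rewrite /forest_verts map_cat flatten_cat. Qed.

Lemma mem_forest_verts es e x :
  e \in es -> x \in cw_verts e -> x \in forest_verts es.
Proof. by move=> ee xe; apply/flattenP; exists (cw_verts e) => //; apply: map_f. Qed.

Lemma size_cw_verts_gt0 e : 0 < size (cw_verts e).
Proof. by elim: e => //= e1 IH1 e2 IH2; rewrite size_cat addn_gt0 IH1. Qed.

Definition union_of U es : Prop :=
  [/\ perm_eq (cw_verts U) (forest_verts es),
      all (@cw_wf T) es -> uniq (forest_verts es) -> cw_wf U,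
      forall k, all (cw_labels_below k) es -> cw_labels_below k U,
      forall x y, cw_arc U x y = has (fun e => cw_arc e x y) es &
      forall x, x \in cw_verts U ->
        exists2 e, e \in es & (x \in cw_verts e) && (cw_lab U x == cw_lab e x)].

Lemma union_of_seq1 e : union_of e [:: e].
Proof.
rewrite /union_of /forest_verts /= cats0 andbT; split=> //.
- by move=> k; rewrite andbT.
- by move=> x y; rewrite orbF.
- by move=> x xe; exists e; rewrite ?mem_head ?xe ?eqxx.
Qed.

Lemma union_of_cat U1 U2 es1 es2 : union_of U1 es1 -> union_of U2 es2 ->
  union_of (CUnion U1 U2) (es1 ++ es2).
Proof.
move=> [p1 w1 l1 a1 b1] [p2 w2 l2 a2 b2]; split=> /=.
- by rewrite forest_verts_cat perm_cat.
- rewrite all_cat forest_verts_cat => /andP[h1 h2] u.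
  move: (u); rewrite cat_uniq => /and3P[u1 _ u2].
  by rewrite w1 // w2 //= (perm_uniq (perm_cat p1 p2)).
- by move=> k; rewrite all_cat => /andP[/l1-> /l2->].
- by move=> x y; rewrite a1 a2 has_cat.
- move=> x; case: ifP => [/b1[e ee he] _|xv1]; first by exists e; rewrite // mem_cat ee.
  rewrite mem_cat xv1 => /b2[e ee he].
  by exists e; rewrite // mem_cat ee orbT.
Qed.

Lemma union_of_perm U es1 es2 : union_of U es1 -> perm_eq es1 es2 -> union_of U es2.
Proof.
move=> [p w l a b] pe; have pf := perm_flatten (perm_map (@cw_verts T) pe).
split.
- exact: perm_trans p pf.
- by rewrite -(perm_all _ pe) -(perm_uniq pf); exact: w.
- by move=> k; rewrite -(perm_all _ pe); exact: l.
- by move=> x y; rewrite a (perm_has _ pe).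
- by move=> x /b[e ee he]; exists e; rewrite // -(perm_mem pe).
Qed.

Definition kraft_sum es := sumn [seq 2 ^ cw_depth e | e <- es].

Lemma kraft_sumE es : kraft_sum es = sumn (map (expn 2) (map (@cw_depth T) es)).
Proof. by rewrite /kraft_sum -map_comp. Qed.

Lemma kraft_sum_gt es e : e \in es -> 1 < size es -> 2 ^ cw_depth e < kraft_sum es.
Proof.
move=> ee sz; rewrite /kraft_sum (perm_sumn (perm_map _ (perm_to_rem ee))) /=.
rewrite -addn1 leq_add2l; have := size_rem ee.
case: (rem e es) => [|e' es'] /= szE; first by lia.
by rewrite addn_gt0 expn_gt0.
Qed.

End UnionTrees.

(* Greedily cut the sequence where the prefix sum would exceed [2 ^ D]: the
   prefix sum and [2 ^ D] are both multiples of the next power [2 ^ d], so at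
   that point the prefix sum is exactly [2 ^ D]. *)
Lemma pow2_greedy_split D (ds : seq nat) acc : sorted geq ds ->
  all (fun d => d <= D) ds -> (forall d, d \in ds -> 2 ^ d %| acc) ->
  acc <= 2 ^ D -> acc + sumn (map (expn 2) ds) <= 2 ^ D.+1 ->
  exists j, acc + sumn (map (expn 2) (take j ds)) <= 2 ^ D /\
            sumn (map (expn 2) (drop j ds)) <= 2 ^ D.
Proof.
elim: ds acc => [|d ds IH] acc; first by move=> *; exists 0; rewrite addn0.
move=> /= srt /andP[dD allD] dv accD tot.
have [le|gt] := leqP (acc + 2 ^ d) (2 ^ D).
  have ge_tr : transitive geq by move=> a b c /= h1 h2; exact: leq_trans h2 h1.
  have /allP ds_le_d := order_path_min ge_tr srt.
  have dv' d' : d' \in ds -> 2 ^ d' %| acc + 2 ^ d.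
    move=> d'in; rewrite dvdn_add ?dv ?in_cons ?d'in ?orbT //.
    by rewrite dvdn_exp2l //; exact: ds_le_d.
  have tot' : acc + 2 ^ d + sumn (map (expn 2) ds) <= 2 ^ D.+1 by rewrite -addnA.
  have [j [h1 h2]] := IH _ (path_sorted srt) allD dv' le tot'.
  by exists j.+1; rewrite /= addnA h1 h2.
exists 0; split; first by rewrite addn0.
have accE : acc = 2 ^ D.
  move: (dv d (mem_head _ _)) (dvdn_exp2l 2 dD) => /dvdnP[a aE] /dvdnP[b bE].
  move: accD gt; rewrite aE bE -mulSnr leq_pmul2r ?expn_gt0 // ltn_pmul2r ?expn_gt0 //.
  by move=> ab ba; congr (_ * _); apply/eqP; rewrite eqn_leq ab -ltnS.
by move: tot; rewrite accE expnS mul2n -addnn leq_add2l.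
Qed.

Lemma kraft_split (T : eqType) D (es : seq (cwexp T)) :
  sorted (fun e1 e2 => cw_depth e2 <= cw_depth e1) es -> 1 < size es ->
  kraft_sum es <= 2 ^ D.+1 ->
  exists j, kraft_sum (take j es) <= 2 ^ D /\ kraft_sum (drop j es) <= 2 ^ D.
Proof.
move=> srt sz wes.
have allD : all (fun d => d <= D) (map (@cw_depth T) es).
  apply/allP => _ /mapP[e ee ->]; rewrite -ltnS -(ltn_exp2l _ _ (isT : 1 < 2)).
  exact: leq_trans (kraft_sum_gt ee sz) wes.
have srtd : sorted geq (map (@cw_depth T) es) by rewrite sorted_map.
have tot : 0 + sumn (map (expn 2) (map (@cw_depth T) es)) <= 2 ^ D.+1.
  by rewrite add0n -kraft_sumE.
have [j] := pow2_greedy_split srtd allD (fun _ _ => dvdn0 _) (leq0n _) tot.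
by rewrite add0n -map_take -map_drop -!kraft_sumE; exists j.
Qed.

(* Kraft's inequality, read as a construction. *)
Lemma kraft_union (T : eqType) D (es : seq (cwexp T)) : es != [::] ->
  kraft_sum es <= 2 ^ D -> exists2 U, union_of U es & cw_depth U <= D.
Proof.
have kraft_seq1 (e : cwexp T) D' : kraft_sum [:: e] <= 2 ^ D' ->
    exists2 U, union_of U [:: e] & cw_depth U <= D'.
  by rewrite /kraft_sum /= addn0 leq_exp2l // => dD; exists e; [exact: union_of_seq1|].
elim: D es => [|D IH] [//|e [|e' es']] _ wes; try exact: kraft_seq1 wes.
  by have := leq_trans (@kraft_sum_gt _ (e :: e' :: es') e (mem_head _ _) isT) wes; rewrite ltnNge expn_gt0.
set es := e :: e' :: es' in wes *.
set s := sort (fun e1 e2 => cw_depth e2 <= cw_depth e1) es.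
have ps : perm_eq s es by rewrite perm_sort.
have srt : sorted (fun e1 e2 => cw_depth e2 <= cw_depth e1) s.
  by apply: sort_sorted => a b; exact: leq_total.
have ws : kraft_sum s <= 2 ^ D.+1 by rewrite /kraft_sum (perm_sumn (perm_map _ ps)).
have szs : 1 < size s by rewrite (perm_size ps).
have [j [w1 w2]] := kraft_split srt szs ws.
have s0 : s != [::] by rewrite -size_eq0 -lt0n ltnW.
have whole_in_D : kraft_sum s <= 2 ^ D -> exists2 U, union_of U es & cw_depth U <= D.+1.
  move=> wS; have [U uU dU] := IH s s0 wS.
  by exists U; [exact: union_of_perm uU ps|exact: leqW].
have sE := cat_take_drop j s.
case E1: (take j s) w1 => [|x1 s1] w1.
  by apply: whole_in_D; rewrite -sE E1.
case E2: (drop j s) w2 => [|x2 s2] w2.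
  by apply: whole_in_D; rewrite -sE E1 E2 cats0.
have [U1 u1 d1] := IH (x1 :: s1) isT w1.
have [U2 u2 d2] := IH (x2 :: s2) isT w2.
exists (CUnion U1 U2); last by rewrite /= ltnS geq_max d1 d2.
by apply: (union_of_perm _ ps); rewrite -sE E1 E2; exact: union_of_cat.
Qed.

Lemma sumn_map_leq_mul (I : eqType) (s : seq I) (g h : I -> nat) c :
  (forall x, x \in s -> g x <= c * h x) -> sumn (map g s) <= c * sumn (map h s).
Proof.
elim: s => [|x s IH] //= gh; rewrite mulnDr leq_add ?gh ?mem_head //.
by apply: IH => y ys; rewrite gh // in_cons ys orbT.
Qed.

Section Forests.
Variables (T : eqType) (k : nat).
Implicit Types (es : seq (cwexp T)) (S : pred T) (lab : T -> nat) (A : rel T).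

(* The last field is the Kraft-weight invariant: a tree of depth [d] on [s]
   vertices satisfies [2 ^ d <= 2 ^ w * s], so that merging trees of total size
   [s] costs only [up_log 2 s] extra depth ([cw_forest_union]). *)
Definition cw_forest S lab A w es :=
  [/\ all (fun e => cw_wf e && cw_labels_below k e) es && uniq (forest_verts es),
      forall x, (x \in forest_verts es) = S x,
      forall e x, e \in es -> x \in cw_verts e -> cw_lab e x = lab x,
      forall x y, has (fun e => cw_arc e x y) es = A x y &
      forall e, e \in es -> 2 ^ cw_depth e <= 2 ^ w * size (cw_verts e)].

Lemma cw_forest_nil S lab A w : (forall x, ~~ S x) -> (forall x y, ~~ A x y) ->
  cw_forest S lab A w [::].
Proof. by move=> S0 A0; split=> // [x|x y]; apply/esym/negbTE. Qed.

Lemma cw_forest_eq S S' lab lab' A A' w es :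
  S =1 S' -> (forall x, S x -> lab x = lab' x) -> A =2 A' ->
  cw_forest S lab A w es -> cw_forest S' lab' A' w es.
Proof.
move=> eS elab eA [ok v l1 a1 d1]; split=> //.
- by move=> x; rewrite v eS.
- move=> e x ee xe; rewrite -elab ?(l1 e) // -v.
  exact: mem_forest_verts ee xe.
- by move=> x y; rewrite a1 eA.
Qed.

Lemma cw_forest_cat S1 S2 lab A1 A2 w es1 es2 :
  cw_forest S1 lab A1 w es1 -> cw_forest S2 lab A2 w es2 ->
  (forall x, S1 x -> ~~ S2 x) ->
  cw_forest (fun x => S1 x || S2 x) lab (fun x y => A1 x y || A2 x y) w (es1 ++ es2).
Proof.
move=> [/andP[ok1 u1] v1 l1 a1 d1] [/andP[ok2 u2] v2 l2 a2 d2] dis; split.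
- rewrite all_cat ok1 ok2 forest_verts_cat cat_uniq u1 u2 /= andbT.
  by apply/hasPn => x; rewrite v1 v2; apply: contraL => /dis.
- by move=> x; rewrite forest_verts_cat mem_cat v1 v2.
- by move=> e x; rewrite mem_cat => /orP[]; [exact: l1|exact: l2].
- by move=> x y; rewrite has_cat a1 a2.
- by move=> e; rewrite mem_cat => /orP[]; [exact: d1|exact: d2].
Qed.

Lemma size_forest_verts_gt0 es : es != [::] -> 0 < size (forest_verts es).
Proof.
case: es => [//|e es] _; rewrite /forest_verts /= size_cat.
exact: leq_trans (size_cw_verts_gt0 e) (leq_addr _ _).
Qed.

Lemma cw_forest_union S lab A w es : cw_forest S lab A w es -> es != [::] ->
  exists2 U, union_of U es & cw_depth U <= w + up_log 2 (size (forest_verts es)).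
Proof.
move=> [_ _ _ _ weight] es0; apply: kraft_union => //.
apply: (@leq_trans (2 ^ w * size (forest_verts es))).
  rewrite /kraft_sum /forest_verts size_flatten /shape -map_comp.
  exact: sumn_map_leq_mul.
by rewrite expnD leq_mul2l up_logP ?orbT.
Qed.

End Forests.

Lemma expn_up_log2_leq s : 0 < s -> 2 ^ up_log 2 s <= s.*2.
Proof.
case: s => // [[|s]] _; first by rewrite up_log1.
have := up_log_gtn (isT : 1 < 2) (isT : 1 < s.+2).
have : 0 < up_log 2 s.+2 by rewrite up_log_gt0.
by case: (up_log 2 s.+2) => // u _ /=; rewrite expnS mul2n leq_double => /ltnW.
Qed.

Lemma kraft_weight_step w s d : 0 < s -> d <= w + up_log 2 s -> 2 ^ d <= 2 ^ w.+1 * s.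
Proof.
move=> s0 dw; apply: (leq_trans (leq_pexp2l (isT : 0 < 2) dw)).
by rewrite expnD expnSr -mulnA leq_mul2l mul2n expn_up_log2_leq ?orbT.
Qed.

Section ArcsAndRelabelling.
Variable T : eqType.
Implicit Types e : cwexp T.

Definition add_arcs (R : rel nat) (ps : seq (nat * nat)) e :=
  foldr (fun ab e => if R ab.1 ab.2 then CArcs ab.1 ab.2 e
                     else if R ab.2 ab.1 then CArcs ab.2 ab.1 e else e) e ps.

Definition oriented_pair (R : rel nat) (ab : nat * nat) u w :=
  if R ab.1 ab.2 then (u == ab.1) && (w == ab.2)
  else if R ab.2 ab.1 then (u == ab.2) && (w == ab.1) else false.

Lemma add_arcs_verts R ps e : cw_verts (add_arcs R ps e) = cw_verts e.
Proof. by elim: ps => //= ab ps IH; do 2?case: ifP => //. Qed.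

Lemma add_arcs_lab R ps e : cw_lab (add_arcs R ps e) = cw_lab e.
Proof. by elim: ps => //= ab ps IH; do 2?case: ifP => //. Qed.

Lemma add_arcs_depth R ps e : cw_depth (add_arcs R ps e) <= cw_depth e + size ps.
Proof.
elim: ps => [|ab ps IH] /=; first by rewrite addn0.
by rewrite addnS; do 2?case: ifP => _ /=; rewrite ?ltnS ?IH ?(leqW IH).
Qed.

Lemma add_arcs_wf R ps e : all (fun ab => ab.1 != ab.2) ps -> cw_wf e ->
  cw_wf (add_arcs R ps e).
Proof.
elim: ps => //= ab ps IH /andP[ne nps] we.
by do 2?case: ifP => //= _; rewrite ?IH // ?andbT // eq_sym.
Qed.

Lemma add_arcs_labels_below k R ps e : all (fun ab => (ab.1 < k) && (ab.2 < k)) ps ->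
  cw_labels_below k e -> cw_labels_below k (add_arcs R ps e).
Proof.
elim: ps => //= ab ps IH /andP[/andP[h1 h2] nps] we.
by do 2?case: ifP => //= _; rewrite ?IH // h1 h2.
Qed.

Lemma add_arcs_arc R ps e x y : cw_arc (add_arcs R ps e) x y =
  cw_arc e x y || [&& x \in cw_verts e, y \in cw_verts e &
                      has (fun ab => oriented_pair R ab (cw_lab e x) (cw_lab e y)) ps].
Proof.
elim: ps => [|ab ps IH] /=; first by rewrite !andbF orbF.
rewrite {1}/oriented_pair; case: ifP => h1; last case: ifP => h2;
  rewrite /= ?add_arcs_verts ?add_arcs_lab IH //;
  by case: (cw_arc e x y) (x \in cw_verts e) (y \in cw_verts e) => [] [] [];
     rewrite //= orbC.
Qed.

Definition relabel_to t (L : seq nat) e := foldr (fun a e => CRelab a t e) e L.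

Lemma relabel_to_verts t L e : cw_verts (relabel_to t L e) = cw_verts e.
Proof. by elim: L. Qed.

Lemma relabel_to_arc t L e : cw_arc (relabel_to t L e) = cw_arc e.
Proof. by elim: L. Qed.

Lemma relabel_to_depth t L e : cw_depth (relabel_to t L e) = cw_depth e + size L.
Proof. by elim: L => [|a L IH] /=; rewrite ?addn0 ?IH ?addnS. Qed.

Lemma relabel_to_wf t L e : cw_wf (relabel_to t L e) = cw_wf e.
Proof. by elim: L. Qed.

Lemma relabel_to_labels_below k t L e : t < k -> all (fun a => a < k) L ->
  cw_labels_below k e -> cw_labels_below k (relabel_to t L e).
Proof. by move=> tk; elim: L => //= a L IH /andP[-> /IH h] /h ->; rewrite tk. Qed.

Lemma relabel_to_lab t L e x :
  cw_lab (relabel_to t L e) x = if cw_lab e x \in L then t else cw_lab e x.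
Proof.
elim: L => [|a L IH] //=; rewrite IH in_cons.
by case: (cw_lab e x \in L); rewrite ?orbT ?orbF; case: ifP.
Qed.

End ArcsAndRelabelling.

Fixpoint label_pairs k :=
  if k is k'.+1 then label_pairs k' ++ [seq (a, k') | a <- iota 0 k'] else [::].

Lemma mem_label_pairs k a b : ((a, b) \in label_pairs k) = (a < b) && (b < k).
Proof.
elim: k => [|k IH] /=; first by rewrite andbF.
rewrite mem_cat IH ltnS (leq_eqVlt b); apply/idP/idP.
  case/orP => [/andP[-> ->]|/mapP[c]]; rewrite ?orbT //.
  by rewrite mem_iota add0n => cb [-> ->]; rewrite eqxx andbT.
case/andP=> ab /orP[/eqP bk|bk]; last by rewrite ab bk.
by apply/orP; right; apply/mapP; exists a; rewrite ?mem_iota ?add0n -?bk.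
Qed.

Lemma size_label_pairs k : (size (label_pairs k)).*2 = k * k.-1.
Proof.
elim: k => [|k IH] //=; rewrite size_cat size_map size_iota doubleD IH.
by case: k {IH} => // k /=; rewrite -mul2n; lia.
Qed.

Lemma label_pairs_neq k : all (fun ab => ab.1 != ab.2) (label_pairs k).
Proof. by apply/allP => [[a b]]; rewrite mem_label_pairs => /andP[/ltn_eqF->]. Qed.

Lemma label_pairs_lt k : all (fun ab => (ab.1 < k) && (ab.2 < k)) (label_pairs k).
Proof.
apply/allP => [[a b]]; rewrite mem_label_pairs => /andP[ab bk] /=.
by rewrite bk (ltn_trans ab bk).
Qed.

Lemma has_label_pairs (R : rel nat) k u w : u < k -> w < k -> (R u w -> ~~ R w u) ->
  has (fun ab => oriented_pair R ab u w) (label_pairs k) = (u != w) && R u w.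
Proof.
move=> uk wk asym; apply/hasP/andP.
  case=> [[a b]]; rewrite mem_label_pairs /oriented_pair /= => /andP[ab bk].
  case: ifP => [h /andP[/eqP-> /eqP->]|_]; first by rewrite h (ltn_eqF ab).
  by case: ifP => // h /andP[/eqP-> /eqP->]; rewrite h eq_sym (ltn_eqF ab).
case=> nuw ruw; case: (ltngtP u w) nuw => // [uw|wu] _.
  by exists (u, w); rewrite ?mem_label_pairs ?uw // /oriented_pair /= ruw !eqxx.
exists (w, u); rewrite ?mem_label_pairs ?wu // /oriented_pair /=.
by rewrite (negbTE (asym ruw)) ruw !eqxx.
Qed.

Definition level_cost k := size (label_pairs k) + k.

Lemma level_cost_leq k : 2 <= k -> level_cost k <= k * (k - 1) + (k - 1).
Proof. by move=> k2; have := size_label_pairs k; rewrite /level_cost -subn1; nia. Qed.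

Section QuestionableRepresentation.
Variables (T : finType) (lt : rel T) (k l i : nat) (dom : nat -> nat)
  (r : nat -> rel nat) (f : T -> seq nat).
Hypothesis k_ge2 : 2 <= k.
Hypothesis hrep : questionable_rep lt i l dom r f.
Hypothesis hwidth : rep_width l dom k.

Let orders : orders_seq l dom r. Proof. by case: hrep. Qed.
Let word x : next_word i l dom (f x). Proof. by case: hrep => _ _ h _ _; exact: h. Qed.
Let f_inj : injective f. Proof. by case: hrep. Qed.
Let ltE x y : next_lt r (f x) (f y) <-> lt x y.
Proof. by case: hrep => _ _ _ _ h; exact: h. Qed.

Lemma size_word_lt x : size (f x) < l.
Proof. by case: (word x) => /andP[]. Qed.

Lemma letter_lt_dom x m : m < size (f x) -> nth 0 (f x) m < dom m.
Proof. by case: (word x) => _; exact. Qed.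

Lemma dom_leq_width m : m < l -> dom m <= k.
Proof. by case: hwidth => h _; exact: h. Qed.

Lemma r_asym m a b : m < l -> a < dom m -> b < dom m -> r m a b -> ~~ r m b a.
Proof.
move=> ml ad bd rab; apply/negP => rba; have [irr tr] := orders ml.
by move: (irr a ad); rewrite (tr a b a ad bd ad rab rba).
Qed.

Definition has_prefix (p : seq nat) x := take (size p) (f x) == p.

Definition letter (p : seq nat) x := nth 0 (f x) (size p).

Definition extends_below (p : seq nat) c x :=
  [&& has_prefix p x, size p < size (f x) & letter p x < c].

Definition lt_on (S : pred T) x y := [&& S x, S y & lt x y].

Lemma has_prefix_rcons p c x : has_prefix (rcons p c) x =
  [&& has_prefix p x, size p < size (f x) & letter p x == c].
Proof.
rewrite /has_prefix /letter size_rcons.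
case: (ltnP (size p) (size (f x))) => h; first by rewrite (take_nth 0 h) eqseq_rcons.
rewrite andbF take_oversize ?(leq_trans h) //; apply/negbTE/eqP => e.
by move: h; rewrite e size_rcons ltnn.
Qed.

Lemma has_prefixE p x : has_prefix p x = (f x == p) || extends_below p k x.
Proof.
rewrite /extends_below /letter; case: (eqVneq (f x) p) => [<-|ne] /=.
  by rewrite /has_prefix take_size eqxx.
case hp: (has_prefix p x) => //=.
case: (ltnP (size p) (size (f x))) => zx /=.
  by apply/esym/(leq_trans (letter_lt_dom zx))/dom_leq_width/(ltn_trans zx)/size_word_lt.
by move: hp; rewrite /has_prefix take_oversize // => /eqP fx; rewrite fx eqxx in ne.
Qed.

Lemma extends_belowS p c x :
  extends_below p c.+1 x = extends_below p c x || has_prefix (rcons p c) x.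
Proof.
rewrite /extends_below has_prefix_rcons ltnS (leq_eqVlt (letter p x)).
by case: (has_prefix p x) (size p < size (f x)) => [] []; rewrite //= orbC.
Qed.

Lemma has_prefix_not_lt x y : has_prefix (f x) y -> ~~ lt x y && ~~ lt y x.
Proof.
move=> /eqP pre; apply/andP; split; apply/negP.
- move=> /ltE[m [mlt _ ne _]].
  move: mlt ne; rewrite leq_min => /andP[mx my].
  by rewrite -{1}pre nth_take ?eqxx.
- move=> /(ltE y x)[m [mlt _ ne _]].
  move: mlt ne; rewrite leq_min => /andP[my mx].
  by rewrite -pre nth_take ?eqxx.
Qed.

Lemma lt_at_letter p x y : has_prefix p x -> has_prefix p y ->
  size p < size (f x) -> size p < size (f y) -> letter p x != letter p y ->
  lt x y = r (size p) (letter p x) (letter p y).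
Proof.
move=> /eqP px /eqP py zx zy ne.
have agree q : q < size p -> nth 0 (f x) q = nth 0 (f y) q.
  by move=> qp; rewrite -(nth_take 0 qp) px -py nth_take.
apply/idP/idP => [/ltE[m [mlt ag ne' rm]]|rm].
  have [mp|pm|mp] := ltngtP m (size p).
  - by move: ne'; rewrite agree ?eqxx.
  - by move: ne; rewrite /letter ag ?eqxx.
  - by rewrite /letter -mp.
by apply/ltE; exists (size p); split; rewrite ?leq_min ?zx ?zy.
Qed.

Lemma lt_on_has_prefix p : lt_on (has_prefix p) =2 lt_on (extends_below p k).
Proof.
move=> x y; apply/and3P/and3P => [[hx hy lxy]|[ex ey lxy]]; last first.
  by rewrite !has_prefixE ex ey lxy !orbT.
split=> //.
- move: (hx); rewrite has_prefixE => /orP[/eqP fx|//].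
  by have := @has_prefix_not_lt x y; rewrite fx hy lxy => /(_ isT)/andP[].
- move: (hy); rewrite has_prefixE => /orP[/eqP fy|//].
  by have := @has_prefix_not_lt y x; rewrite fy hx lxy => /(_ isT)/andP[].
Qed.

Lemma same_letter_lt_onS p c x y :
  (letter p x == letter p y) && lt_on (extends_below p c) x y
    || lt_on (has_prefix (rcons p c)) x y =
  (letter p x == letter p y) && lt_on (extends_below p c.+1) x y.
Proof.
rewrite /lt_on /extends_below !has_prefix_rcons !ltnS.
move: (letter p x) (letter p y) => u w.
case: (has_prefix p x) (has_prefix p y) (size p < size (f x)) (size p < size (f y))
  (lt x y) => [] [] [] [] []; rewrite /= ?andbF ?orbF ?andbT //.
case: (eqVneq u w) => [<-|uw] /=; first by rewrite !andbb [u <= c]leq_eqVlt orbC.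
by apply: contraNF uw => /andP[/eqP-> /eqP->].
Qed.

Definition prefix_forest p t h :=
  cw_forest k (has_prefix p) (fun=> t) (lt_on (has_prefix p)) (level_cost k * h).

Definition children_forest p c h :=
  cw_forest k (extends_below p c) (letter p)
    (fun x y => (letter p x == letter p y) && lt_on (extends_below p c) x y)
    (level_cost k * h).

Definition leaf (p : seq nat) t : seq (cwexp T) :=
  if [pick x | f x == p] is Some v then [:: CVert v t] else [::].

Lemma leaf_forest p t w : t < k ->
  cw_forest k (fun x => f x == p) (fun=> t) (fun _ _ => false) w (leaf p t).
Proof.
move=> tk; rewrite /leaf; case: pickP => [v /eqP fv|none]; last first.
  by apply: cw_forest_nil => [x|//]; rewrite none.
split=> //=.
- by rewrite tk.
- by move=> x; rewrite /forest_verts /= mem_seq1 -fv (inj_eq f_inj).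
- by move=> e x; rewrite mem_seq1 => /eqP ->.
- by move=> e; rewrite mem_seq1 => /eqP -> /=; rewrite muln1 expn_gt0.
Qed.

Lemma prefix_forest_cat_leaf p t h Gs : t < k ->
  cw_forest k (extends_below p k) (fun=> t) (lt_on (extends_below p k)) (level_cost k * h) Gs ->
  prefix_forest p t h (Gs ++ leaf p t).
Proof.
move=> tk hG.
have disj x : extends_below p k x -> ~~ (f x == p).
  by case/and3P=> _ zx _; apply: contraTneq zx => ->; rewrite ltnn.
apply: cw_forest_eq (cw_forest_cat hG (leaf_forest p _ tk) disj) => //.
- by move=> x; rewrite has_prefixE orbC.
- by move=> x y; rewrite orbF lt_on_has_prefix.
Qed.

Lemma children_forest_exists p h :
  (forall c, c < k -> exists es, prefix_forest (rcons p c) c h es) ->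
  forall c, c <= k -> exists L, children_forest p c h L.
Proof.
move=> child; elim=> [|c IH] ck.
  by exists [::]; apply: cw_forest_nil => [x|x y]; rewrite /lt_on /extends_below ltn0 !andbF.
have [L hL] := IH (ltnW ck).
have [es hes] := child c ck.
have hes' : cw_forest k (has_prefix (rcons p c)) (letter p)
    (lt_on (has_prefix (rcons p c))) (level_cost k * h) es.
  by apply: cw_forest_eq hes => // x; rewrite has_prefix_rcons => /and3P[_ _ /eqP ->].
have disj x : extends_below p c x -> ~~ has_prefix (rcons p c) x.
  by case/and3P=> _ _ lc; rewrite has_prefix_rcons (ltn_eqF lc) !andbF.
exists (L ++ es); apply: cw_forest_eq (cw_forest_cat hL hes' disj) => //.
- by move=> x; rewrite extends_belowS.
- by move=> x y; rewrite same_letter_lt_onS.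
Qed.

Lemma level_arcs p x y : extends_below p k x -> extends_below p k y ->
  ((letter p x == letter p y) && lt x y)
    || has (fun ab => oriented_pair (r (size p)) ab (letter p x) (letter p y))
           (label_pairs k)
  = lt x y.
Proof.
move=> /and3P[hx zx lx] /and3P[hy zy ly].
have pl : size p < l by exact: ltn_trans zx (size_word_lt x).
rewrite has_label_pairs //; last by apply: r_asym => //; exact: letter_lt_dom.
case: eqP => [_|/eqP ne] /=; first by rewrite orbF.
by rewrite (lt_at_letter hx hy zx zy ne).
Qed.

Lemma level_forest p t h L : t < k -> children_forest p k h L ->
  exists Gs, cw_forest k (extends_below p k) (fun=> t) (lt_on (extends_below p k))
               (level_cost k * h.+1) Gs.
Proof.
move=> tk hL; have [L0|L0] := eqVneq L [::].
  have [_ vL _ _ _] := hL.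
  by exists [::]; apply: cw_forest_nil => [x|x y]; rewrite /lt_on -vL L0 ?andbF.
have [U [permU wfU lbU arcU labU] dU] := cw_forest_union hL L0.
have [/andP[okL uL] vL lL aL _] := hL.
have vertsU x : (x \in cw_verts U) = extends_below p k x by rewrite (perm_mem permU) vL.
have letterU x : x \in cw_verts U -> cw_lab U x = letter p x.
  by case/labU => e ee /andP[xe /eqP ->]; exact: lL.
exists [:: relabel_to t (rem t (iota 0 k)) (add_arcs (r (size p)) (label_pairs k) U)].
split; rewrite /forest_verts /= ?cats0 ?relabel_to_verts ?add_arcs_verts.
- rewrite relabel_to_wf add_arcs_wf ?label_pairs_neq ?wfU ?(perm_uniq permU) //=;
    last by apply/allP => e /(allP okL) /andP[].
  rewrite uL andbT andbT; apply: relabel_to_labels_below => //.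
    by apply/allP => a /mem_rem; rewrite mem_iota.
  apply: add_arcs_labels_below; first exact: label_pairs_lt.
  by apply: lbU; apply/allP => e /(allP okL) /andP[].
- exact: vertsU.
- move=> e x; rewrite mem_seq1 => /eqP -> /=.
  rewrite relabel_to_verts add_arcs_verts => xU.
  rewrite relabel_to_lab add_arcs_lab letterU // (mem_rem_uniq _ (iota_uniq 0 k)).
  by move: xU; rewrite vertsU inE mem_iota => /and3P[_ _ ->]; rewrite andbT; case: eqP.
- move=> x y; rewrite orbF relabel_to_arc add_arcs_arc arcU aL !vertsU /lt_on.
  case ex: (extends_below p k x); last by rewrite !andbF.
  case ey: (extends_below p k y); last by rewrite !andbF.
  by rewrite /= !letterU ?vertsU //; exact: level_arcs.
- move=> e; rewrite mem_seq1 => /eqP -> /=.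
  rewrite relabel_to_verts add_arcs_verts relabel_to_depth size_rem ?mem_iota //.
  have -> : level_cost k * h.+1 = (level_cost k * h + size (label_pairs k) + k.-1).+1.
    by rewrite mulnS /level_cost; lia.
  rewrite size_iota (perm_size permU); apply: kraft_weight_step.
    exact: size_forest_verts_gt0.
  have := add_arcs_depth (r (size p)) (label_pairs k) U; lia.
Qed.

Lemma prefix_forest_exists h : forall p t, t < k -> l.-1 <= size p + h ->
  exists es, prefix_forest p t h es.
Proof.
elim: h => [|h IH] p t tk hp.
  exists ([::] ++ leaf p t); apply: prefix_forest_cat_leaf => //.
  have none x : ~~ extends_below p k x.
    by apply/negP => /and3P[_ zx _]; have := size_word_lt x; lia.
  by apply: cw_forest_nil => [//|x y]; rewrite /lt_on (negbTE (none x)).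
have children c : c < k -> exists es, prefix_forest (rcons p c) c h es.
  by move=> ck; apply: IH => //; rewrite size_rcons; lia.
have [L hL] := children_forest_exists children (leqnn k).
have [Gs hGs] := level_forest tk hL.
by exists (Gs ++ leaf p t); exact: prefix_forest_cat_leaf.
Qed.

Lemma questionable_rep_cw_expr : 0 < #|T| -> exists e : cwexp T,
  cw_expr_of lt k e /\ cw_depth e <= level_cost k * l.-1 + up_log 2 #|T|.
Proof.
move=> n_pos; have [es hes] := prefix_forest_exists (p := [::]) (ltnW k_ge2) (leqnn _).
have all_prefix x : has_prefix [::] x by rewrite /has_prefix take0.
have [/andP[ok u] v _ a _] := hes.
have sizeT : size (forest_verts es) = #|T|.
  by rewrite -(card_uniqP u); apply: eq_card => x; rewrite v all_prefix.
have es0 : es != [::] by apply: contraTneq n_pos => es0; rewrite -sizeT es0.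
have [U [permU wfU lbU arcU _] dU] := cw_forest_union hes es0.
exists U; split; last by rewrite -sizeT.
split.
- by apply: wfU => //; apply/allP => e /(allP ok) /andP[].
- by apply: lbU; apply/allP => e /(allP ok) /andP[].
- by rewrite (perm_uniq permU).
- by move=> x; rewrite (perm_mem permU) v.
- by move=> x y; rewrite arcU a /lt_on !all_prefix.
Qed.

End QuestionableRepresentation.

Theorem lemma7p4 (T : finType) (lt : rel T)
  (lt_irr : irreflexive lt) (lt_trans : transitive lt) (n_pos : 0 < #|T|)
  (k l i : nat) (dom : nat -> nat) (r : nat -> rel nat) (f : T -> seq nat)
  (k_ge2 : 2 <= k) (hrep : questionable_rep lt i l dom r f)
  (hwidth : rep_width l dom k) :
  exists e : cwexp T, cw_expr_of lt k e /\
    cw_depth e <= l * (k * (k - 1) + up_log 2 (k - 1)) + up_log 2 #|T|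
                  + (l - 1) * (k - 1).
Proof.
have [e [he de]] := questionable_rep_cw_expr k_ge2 hrep hwidth n_pos.
exists e; split=> //; apply: (leq_trans de).
have := level_cost_leq k_ge2; move: (level_cost k) => c; rewrite -subn1; nia.
Qed.
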